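(* Let $G$ be a connected graph. Then: (i) $\mu_t(G)=n(G)$ if and only if $G$ is a complete graph; (ii) $\mu_t(G)=n(G)-1$ if and only if $G$ is a non-complete graph with domination number $\gamma(G)=1$ (i.e., $G$ is non-complete and has a vertex adjacent to all other vertices).
   Context: All graphs are finite, simple and undirected; $n(G)$ denotes the order of $G$ and $\gamma(G)$ its domination number. Let $G$ be a connected graph and $X\subseteq V(G)$. Two vertices $x,y\in V(G)$ are $X$-visible if there exists a shortest $x,y$-path in $G$ none of whose internal vertices (i.e., vertices other than $x$ and $y$) belongs to $X$. The set $X$ is a total mutual-visibility set of $G$ if every two vertices of $G$ are $X$-visible (the empty set is allowed). The total mutual-visibility number $\mu_t(G)$ is the maximum cardinality of a total mutual-visibility set of $G$. *)

(* Simple graphs: a symmetric irreflexive relation e on a finType T. *)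
From mathcomp Require Import all_boot.
From mathcomp Require Import boolp.
Set Implicit Arguments. Unset Strict Implicit. Unset Printing Implicit Defensive.

Section Graphs.
Variables (T : finType) (e : rel T).

Definition walk (x y : T) (p : seq T) : bool := path e x p && (last x p == y).

Definition shortest_path (x y : T) (p : seq T) : Prop :=
  walk x y p /\ forall q, walk x y q -> size p <= size q.

Definition internal (x : T) (p : seq T) : seq T := behead (belast x p).

Definition visible (X : {set T}) (x y : T) : Prop :=
  exists p, shortest_path x y p /\ all (fun v => v \notin X) (internal x p).

Definition total_mutual_visibility_set (X : {set T}) : Prop :=
  forall x y : T, visible X x y.

Definition mu_t : nat :=
  \max_(X : {set T} | `[< total_mutual_visibility_set X >]) #|X|.

Definition complete_graph : Prop := forall x y : T, x != y -> e x y.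

Definition dominating (D : {set T}) : bool :=
  [forall v, (v \in D) || [exists u in D, e u v]].

Definition domination_number : nat :=
  \big[minn/#|T|]_(D : {set T} | dominating D) #|D|.

Definition connected_graph : Prop := forall x y : T, connect e x y.

End Graphs.

From mathcomp Require Import all_boot.
From mathcomp Require Import boolp.
Set Implicit Arguments. Unset Strict Implicit. Unset Printing Implicit Defensive.

(* Both parts of the corollary reduce to two visibility facts about a shortest
   x,y-path in a simple graph:
   - if every vertex except x lies in X, then x can only be X-visible from
     its closed neighbourhood, because the first internal vertex of a longer
     path would have to be x itself;
   - two vertices at distance two are X-visible through any common neighbour
     outside X.
   From these, V(G) is a total mutual-visibility set exactly when G is
   complete, and V(G) - u is one exactly when u is a universal vertex.
   Since mu_t is attained by some total mutual-visibility set (the empty set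
   is one in a connected graph), mu_t = n forces X = V(G), and mu_t = n - 1
   forces X = V(G) - u.  Finally, in a non-complete graph, domination number 1
   is the same as having a universal vertex. *)

Lemma bigmin_le (I : eqType) (r : seq I) (P : pred I) (F : I -> nat) x i0 :
  i0 \in r -> P i0 -> \big[minn/x]_(i <- r | P i) F i <= F i0.
Proof.
elim: r => [|a r IHr] //; rewrite inE big_cons => /orP[/eqP <-|i0r] Pi0.
  by rewrite Pi0 geq_minl.
case: (P a); last exact: IHr.
by rewrite geq_min IHr ?orbT.
Qed.

Lemma bigmin_attained (I : Type) (r : seq I) (P : pred I) (F : I -> nat) x :
  let m := \big[minn/x]_(i <- r | P i) F i in
  m = x \/ exists2 i, P i & F i = m.
Proof.
apply: (big_ind (fun m => m = x \/ exists2 i, P i & F i = m)); first by left.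
  by move=> a b Ha Hb; case: leqP.
by move=> i Pi; right; exists i.
Qed.

Section Visibility.
Variables (T : finType) (e : rel T).
Hypothesis e_irr : irreflexive e.

Lemma shortest_path_exists (x y : T) :
  connect e x y -> exists p, shortest_path e x y p.
Proof.
move=> /connectP[p p_path ->].
have walk_len : exists n, `[< exists q, walk e x (last x p) q /\ size q = n >].
  by exists (size p); apply/asboolP; exists p; rewrite /walk p_path eqxx.
case: (ex_minnP walk_len) => m /asboolP[q [q_walk <-]] q_min.
by exists q; split=> // r r_walk; apply: q_min; apply/asboolP; exists r.
Qed.

Lemma visible_refl (X : {set T}) (x : T) : visible e X x x.
Proof. by exists [::]; split=> //; split=> //; rewrite /walk /= eqxx. Qed.

Lemma visible_edge (X : {set T}) (x y : T) : e x y -> visible e X x y.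
Proof.
move=> exy; have x_neq_y : x != y by apply: contraTneq exy => ->; rewrite e_irr.
exists [:: y]; split=> //; split; first by rewrite /walk /= exy eqxx.
by case=> [|z q] //; rewrite /walk /= => /eqP y_eq_x; rewrite y_eq_x eqxx in x_neq_y.
Qed.

Lemma visible_common_neighbour (X : {set T}) (x u y : T) :
  x != y -> ~~ e x y -> e x u -> e u y -> u \notin X -> visible e X x y.
Proof.
move=> x_neq_y nexy exu euy uX.
exists [:: u; y]; split; last by rewrite /= uX.
split; first by rewrite /walk /= exu euy eqxx.
case=> [|z [|w q]] //; rewrite /walk /=.
  by move=> /eqP y_eq_x; rewrite y_eq_x eqxx in x_neq_y.
by rewrite andbT => /andP[exz /eqP z_eq_y]; rewrite -z_eq_y exz in nexy.
Qed.

(* If every vertex other than x lies in X, then x is X-visible only from its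
   neighbours: the first internal vertex of a longer shortest path would be x. *)
Lemma visible_all_but_source (X : {set T}) (x y : T) :
  [set~ x] \subset X -> visible e X x y -> x != y -> e x y.
Proof.
move=> sub_X [[|v [|w r]] [[/andP[p_path /eqP p_last] _] p_int]] x_neq_y /=.
- by rewrite -p_last eqxx in x_neq_y.
- by rewrite -p_last; move: p_path => /= /andP[].
- move: p_path p_int => /= /andP[exv _] /andP[vX _].
  have : v \notin [set~ x] by apply: contra vX; apply: (subsetP sub_X).
  by rewrite in_setC1 negbK => /eqP v_eq_x; rewrite v_eq_x e_irr in exv.
Qed.

End Visibility.

Section TotalMutualVisibility.
Variables (T : finType) (e : rel T).
Hypotheses (e_sym : symmetric e) (e_irr : irreflexive e).

Notation tmv := (total_mutual_visibility_set e).

Definition universal (u : T) : Prop := forall v, v != u -> e u v.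

Lemma complete_tmv (X : {set T}) : complete_graph e -> tmv X.
Proof.
move=> e_complete x y; case: (eqVneq x y) => [<-|/e_complete exy].
  exact: visible_refl.
exact: visible_edge.
Qed.

Lemma tmv_setT_complete : tmv [set: T] -> complete_graph e.
Proof.
by move=> tmvT x y; apply: (visible_all_but_source e_irr _ (tmvT x y)); rewrite subsetT.
Qed.

Lemma tmv_setC1 (u : T) : tmv [set~ u] <-> universal u.
Proof.
split=> [tmv_u v v_neq_u|u_univ x y].
  by apply: (visible_all_but_source e_irr _ (tmv_u u v)); rewrite // eq_sym.
case: (eqVneq x y) => [<-|x_neq_y]; first exact: visible_refl.
have [exy|nexy] := boolP (e x y); first exact: visible_edge.
have x_neq_u : x != u.
  by apply: contraNneq nexy => x_eq_u; rewrite x_eq_u u_univ // eq_sym -x_eq_u.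
have y_neq_u : y != u.
  by apply: contraNneq nexy => y_eq_u; rewrite y_eq_u e_sym u_univ // -y_eq_u.
apply: (visible_common_neighbour (u := u) x_neq_y nexy); last by rewrite setC11.
  by rewrite e_sym; apply: u_univ.
exact: u_univ.
Qed.

Lemma tmv_le_mu_t (X : {set T}) : tmv X -> #|X| <= mu_t e.
Proof.
by move=> tmvX; apply: (@leq_bigmax_cond _ _ (fun X : {set T} => #|X|)); apply/asboolP.
Qed.

Lemma mu_t_le_card : mu_t e <= #|T|.
Proof. by apply/bigmax_leqP => X _; apply: max_card. Qed.

(* In a connected graph the empty set is a total mutual-visibility set, so the
   maximum defining mu_t is attained. *)
Lemma mu_t_attained : connected_graph e -> exists2 X, tmv X & mu_t e = #|X|.
Proof.
move=> e_conn.
have tmv0 : tmv set0.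
  move=> x y; have [p p_short] := shortest_path_exists (e_conn x y).
  by exists p; split=> //; apply/allP=> v _; rewrite inE.
have tmv_nonempty : 0 < #|[pred X : {set T} | `[< tmv X >]]|.
  by apply/card_gt0P; exists set0; rewrite inE; apply/asboolP.
have [X] := eq_bigmax_cond (fun X : {set T} => #|X|) tmv_nonempty.
by rewrite inE => /asboolP tmvX mu_X; exists X.
Qed.

Hypothesis e_conn : connected_graph e.

Lemma mu_t_full : mu_t e = #|T| <-> complete_graph e.
Proof.
split=> [mu_n|e_complete].
  have [X tmvX mu_X] := mu_t_attained e_conn.
  have X_full : X = [set: T].
    by apply/eqP; rewrite eqEcard subsetT cardsT -mu_X mu_n leqnn.
  by apply: tmv_setT_complete; rewrite -X_full.
apply/eqP; rewrite eqn_leq mu_t_le_card -cardsT.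
exact/tmv_le_mu_t/complete_tmv.
Qed.

Lemma mu_t_full_minus_one :
  0 < #|T| ->
  mu_t e = #|T| - 1 <-> ~ complete_graph e /\ exists u, universal u.
Proof.
move=> T_nonempty; split=> [mu_n1|[e_incomplete [u u_univ]]].
  split=> [/mu_t_full mu_n|].
    by move: T_nonempty; rewrite -ltn_predL -subn1 -mu_n1 mu_n ltnn.
  have [X tmvX mu_X] := mu_t_attained e_conn.
  have /cards1P[u Xc_u] : #|~: X| == 1.
    by rewrite -(eqn_add2l #|X|) cardsC -mu_X mu_n1 addn1 subn1 prednK.
  by exists u; apply/tmv_setC1; rewrite -Xc_u setCK.
have mu_ge : #|T| - 1 <= mu_t e.
  by rewrite subn1 -(cardsC1 u); apply/tmv_le_mu_t/tmv_setC1.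
have mu_neq : mu_t e != #|T| by apply: contra_notN e_incomplete => /eqP/mu_t_full.
apply/eqP; rewrite eqn_leq mu_ge andbT -ltnS subn1 prednK //.
by rewrite ltn_neqAle mu_neq mu_t_le_card.
Qed.

End TotalMutualVisibility.

Section Domination.
Variables (T : finType) (e : rel T).

Lemma dominating_set1 (u : T) : dominating e [set u] <-> universal e u.
Proof.
split=> [/forallP u_dom v v_neq_u|u_univ].
  move: (u_dom v); rewrite in_set1 (negbTE v_neq_u) /=.
  by case/existsP=> w /andP[]; rewrite in_set1 => /eqP ->.
apply/forallP=> v; case: (eqVneq v u) => [->|v_neq_u]; first by rewrite set11.
by apply/orP; right; apply/existsP; exists u; rewrite set11 u_univ.
Qed.

Lemma domination_number_gt0 : 0 < #|T| -> 0 < domination_number e.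
Proof.
move=> T_nonempty; have /card_gt0P[v _] := T_nonempty.
apply: (big_ind (fun m => 0 < m)) => //.
  by move=> a b a_gt0 b_gt0; rewrite leq_min a_gt0 b_gt0.
move=> D /forallP/(_ v)/orP[v_in_D|/existsP[u /andP[u_in_D _]]]; apply/card_gt0P.
  by exists v.
by exists u.
Qed.

Lemma card_le1_complete : #|T| <= 1 -> complete_graph e.
Proof. by move=> /card_le1_eqP T_le1 x y; rewrite (T_le1 x y) ?inE ?eqxx. Qed.

Lemma domination_number1P :
  ~ complete_graph e -> domination_number e = 1 <-> exists u, universal e u.
Proof.
move=> e_incomplete; split=> [gamma1|[u u_univ]].
  (* gamma(G) is either its default value n(G), impossible for a non-complete
     graph, or the size of a dominating set, which is then a singleton. *)
  case: (bigmin_attained (index_enum {set T}) (dominating e) (fun D => #|D|) #|T|);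
    rewrite -/(domination_number e) gamma1.
    by move=> T1; case: e_incomplete; apply: card_le1_complete; rewrite -T1.
  case=> D D_dom /eqP/cards1P[u D_u].
  by exists u; apply/dominating_set1; rewrite -D_u.
apply/eqP; rewrite eqn_leq domination_number_gt0; last by apply/card_gt0P; exists u.
rewrite andbT -(cards1 u); apply: bigmin_le; first by rewrite mem_index_enum.
exact/dominating_set1.
Qed.

End Domination.

Theorem corollary2p3 (T : finType) (e : rel T)
    (e_sym : symmetric e) (e_irr : irreflexive e)
    (T_nonempty : 0 < #|T|) (G_conn : connected_graph e) :
  (mu_t e = #|T| <-> complete_graph e) /\
  (mu_t e = #|T| - 1 <-> ~ complete_graph e /\ domination_number e = 1).
Proof.
split; first exact: mu_t_full.
rewrite (mu_t_full_minus_one e_sym e_irr G_conn T_nonempty).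
split=> [[e_incomplete u_univ]|[e_incomplete gamma1]]; split=> //.
  exact/(domination_number1P e_incomplete).
exact/(domination_number1P e_incomplete).
Qed.
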